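(* Let $m,n\ge1$ with $m+n\ge3$ and $s>1$. Let $P\in\mathbb{R}^{2m\times 2n}$ be the block matrix $P=\begin{bmatrix} s\mathbf{1} & \mathbf{1}\\ \mathbf{1} & s\mathbf{1}\end{bmatrix}$ with $m\times n$ blocks, where $\mathbf{1}$ is the all-ones matrix. For non-negative $Q\in\mathbb{R}^{2m\times 2n}$ with no zero row or column, let $J(Q)=\|Q-P\|_F^2 - \lambda(\sigma_1(B(Q))+\sigma_2(B(Q)))$, where $\lambda>0$ and $B(Q)$ is the DTM of the joint pmf $Q/(\mathbf{1}^TQ\mathbf{1})$. Let $Q_1=\begin{bmatrix} s\mathbf{1} & \mathbf{0}\\ \mathbf{0} & s\mathbf{1}\end{bmatrix}$ (with $m\times n$ blocks) and let $Q_2$ be obtained from $P$ by setting to $0$ all entries of the last row and of the last column except the $(2m,2n)$ entry, which equals $s$. Then $J(Q_1)=2mn-2\lambda$ and $J(Q_2)=m+n+s^2(m+n-2)-2\lambda$. Consequently, if $s<\sqrt{(2mn-m-n)/(m+n-2)}$, then $J(Q_2)<J(Q_1)$, so $Q_1$ is not a global minimizer of $J$ over non-negative matrices.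
   Context: For a joint pmf $P_{Y,X}$ (viewed as a matrix) with strictly positive marginals $P_Y$ (row sums) and $P_X$ (column sums), the divergence transition matrix is $B(P_{Y,X})=[P_Y]^{-1/2}P_{Y,X}[P_X]^{-1/2}$, where $[P]$ is the diagonal matrix with $P$ on its diagonal; its singular values are $\sigma_1\ge\sigma_2\ge\cdots$ and $\sigma_1=1$. $\|\cdot\|_F$ is the Frobenius norm. *)

(* real numbers are modelled by an arbitrary real closed field R. *)
From HB Require Import structures.
From Stdlib Require Import ClassicalEpsilon.
From mathcomp Require Import all_boot all_order all_algebra.
Set Implicit Arguments. Unset Strict Implicit. Unset Printing Implicit Defensive.
Import Order.TTheory GRing.Theory Num.Theory.
Local Open Scope ring_scope.

Section Defs.
Variable R : rcfType.

Definition frob_norm (p q : nat) (A : 'M[R]_(p, q)) : R :=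
  Num.sqrt (\sum_(i < p) \sum_(j < q) A i j ^+ 2).

(* s is the list sigma_1 >= sigma_2 >= ... >= 0 of the min(p,q) singular values of A:
   their squares are the eigenvalues (with multiplicity) of A A^T, padded with zeros. *)
Definition is_singvals (p q : nat) (A : 'M[R]_(p, q)) (s : seq R) : Prop :=
  [/\ size s = minn p q,
      sorted (fun x y => y <= x) s,
      all (fun x => 0 <= x) s &
      char_poly (A *m A^T) = 'X^(p - minn p q) * \prod_(x <- s) ('X - (x ^+ 2)%:P)].

Definition singvals (p q : nat) (A : 'M[R]_(p, q)) : seq R :=
  epsilon (inhabits [::]) (is_singvals A).

(* k-th singular value, 1-indexed: sigma 1 A is the largest *)
Definition sigma (p q : nat) (k : nat) (A : 'M[R]_(p, q)) : R :=
  nth 0 (singvals A) k.-1.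

(* marginals of a joint pmf P_{Y,X} viewed as a matrix *)
Definition rowm (p q : nat) (M : 'M[R]_(p, q)) : 'rV[R]_p := \row_i \sum_(j < q) M i j.
Definition colm (p q : nat) (M : 'M[R]_(p, q)) : 'rV[R]_q := \row_j \sum_(i < p) M i j.

Definition DTM (p q : nat) (M : 'M[R]_(p, q)) : 'M[R]_(p, q) :=
  diag_mx (\row_i (Num.sqrt (rowm M 0 i))^-1) *m M *m
  diag_mx (\row_j (Num.sqrt (colm M 0 j))^-1).

Definition total (p q : nat) (Q : 'M[R]_(p, q)) : R := \sum_(i < p) \sum_(j < q) Q i j.

Definition admissible (p q : nat) (Q : 'M[R]_(p, q)) : Prop :=
  (forall i j, 0 <= Q i j) /\
  (forall i, exists j, Q i j != 0) /\ (forall j, exists i, Q i j != 0).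

Definition Jfun (p q : nat) (lam : R) (P Q : 'M[R]_(p, q)) : R :=
  frob_norm (Q - P) ^+ 2
  - lam * (sigma 1 (DTM ((total Q)^-1 *: Q)) + sigma 2 (DTM ((total Q)^-1 *: Q))).

Definition Pmat (m n : nat) (s : R) : 'M[R]_(m + m, n + n) :=
  block_mx (const_mx s) (const_mx 1) (const_mx 1) (const_mx s).

Definition Q1mat (m n : nat) (s : R) : 'M[R]_(m + m, n + n) :=
  block_mx (const_mx s) 0 0 (const_mx s).

Definition Q2mat (m n : nat) (s : R) : 'M[R]_(m + m, n + n) :=
  \matrix_(i, j)
    if (i == (m + m).-1 :> nat) || (j == (n + n).-1 :> nat) then
      (if (i == (m + m).-1 :> nat) && (j == (n + n).-1 :> nat) then s else 0)
    else Pmat m n s i j.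

End Defs.

(* P, Q1 and Q2 are typed matrices: Q i j = W (tr i) (tc j) for a t x t
   matrix W and type maps tr, tc of rows and columns (t = 2 for the two
   blocks of Q1, t = 3 for Q2, whose last row and column form their own
   type).  For such a matrix the Frobenius term of J is a weighted sum over
   types, and DTM DTM^T = U G U^T; Sylvester's identity
   char_poly (U K) X^r = X^p char_poly (K U) then shows that its nonzero
   spectrum is that of a t x t reduced matrix.  The reduced matrix of Q1 is
   the identity, and that of Q2 has eigenvalues 1, 1 and mu in [0, 1].  As
   the singular values are determined by char_poly (A A^T), both DTMs have
   sigma_1 = sigma_2 = 1, which gives the two values of J; the comparison
   is then an inequality between real numbers. *)

From Pilot Require Import Defs.
From HB Require Import structures.
From Stdlib Require Import ClassicalEpsilon.
From mathcomp Require Import all_boot all_order all_algebra.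
From mathcomp Require Import ring lra zify.
Set Implicit Arguments. Unset Strict Implicit. Unset Printing Implicit Defensive.
Import Order.TTheory GRing.Theory Num.Theory.
Local Open Scope ring_scope.

(* Sylvester's identity: U K and K U have the same nonzero spectrum.  It is
   proved by comparing two block factorizations of [X, U; K, 1]. *)
Lemma char_poly_mulmxC (R : comNzRingType) p r (U : 'M[R]_(p, r)) (K : 'M[R]_(r, p)) :
  char_poly (U *m K) * 'X^r = 'X^p * char_poly (K *m U).
Proof.
set Up := map_mx polyC U; set Kp := map_mx polyC K.
have eUK : char_poly_mx (U *m K) = 'X%:M - Up *m Kp by rewrite /char_poly_mx map_mxM.
have eKU : char_poly_mx (K *m U) = 'X%:M - Kp *m Up by rewrite /char_poly_mx map_mxM.
pose N := block_mx ('X%:M : 'M_p) Up Kp (1%:M : 'M_r).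
have N_left : block_mx 1%:M Up 0 1%:M *m block_mx ('X%:M - Up *m Kp) 0 Kp 1%:M = N.
  by rewrite mulmx_block ?mul1mx ?mul0mx ?mulmx0 ?mulmx1 ?add0r ?addr0 subrK.
have N_right : N *m block_mx 1%:M (- Up) 0 ('X%:M) =
               block_mx ('X%:M) 0 Kp ('X%:M - Kp *m Up).
  rewrite mulmx_block ?mulmx1 ?mulmx0 ?mul1mx ?mul0mx ?addr0 ?add0r.
  by rewrite mulmxN mul_scalar_mx mul_mx_scalar addNr mulmxN addrC.
have detN : \det N = char_poly (U *m K).
  by rewrite -N_left det_mulmx det_ublock det_lblock !det1 /char_poly eUK !mul1r mulr1.
have := congr1 determinant N_right.
by rewrite det_mulmx det_ublock det_lblock detN det1 mul1r !det_scalar /char_poly eKU.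
Qed.

Section SingularValues.
Variable R : rcfType.

(* The singular values are uniquely determined: their squares are the roots
   of char_poly (A A^T), and a sorted list of nonnegative numbers is
   determined by the multiset of its squares. *)
Lemma is_singvals_uniq p q (A : 'M[R]_(p, q)) s1 s2 :
  is_singvals A s1 -> is_singvals A s2 -> s1 = s2.
Proof.
case=> _ so1 nn1 c1 [_ so2 nn2 c2].
have eprod : \prod_(x <- s1) ('X - (x ^+ 2)%:P) = \prod_(x <- s2) ('X - (x ^+ 2)%:P).
  apply: (mulfI (x := 'X^(p - minn p q))); first by rewrite expf_neq0 // polyX_eq0.
  by rewrite -c1 -c2.
have perm_sq : perm_eq (map (fun x => x ^+ 2) s1) (map (fun x => x ^+ 2) s2).
  by apply: prod_XsubC_eq; rewrite !big_map.
have sorted_sq (s : seq R) : sorted (fun x y => y <= x) s -> all (fun x => 0 <= x) s ->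
    sorted (fun x y => y <= x) (map (fun x => x ^+ 2) s).
  move=> so nn; apply: (homo_sorted_in (P := fun x : R => 0 <= x)
                                       (e := fun x y : R => y <= x)) => //.
  by move=> x y hx hy /= hxy; rewrite ler_sqr ?nnegrE.
have eq_sq : map (fun x => x ^+ 2) s1 = map (fun x => x ^+ 2) s2.
  apply: (sorted_eq _ _ (sorted_sq _ so1 nn1) (sorted_sq _ so2 nn2) perm_sq).
    by move=> x y z /= h1 h2; apply: le_trans h2 h1.
  by move=> x y /andP [h1 h2]; apply/eqP; rewrite eq_le h1 h2.
have sqrt_sq (s : seq R) : all (fun x => 0 <= x) s -> map Num.sqrt (map (fun x => x ^+ 2) s) = s.
  move=> nn; rewrite -map_comp -[RHS]map_id; apply/eq_in_map => x /(allP nn) hx /=.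
  by rewrite sqrtr_sqr ger0_norm.
by rewrite -(sqrt_sq _ nn1) -(sqrt_sq _ nn2) eq_sq.
Qed.

Lemma sigma_is_singvals p q (A : 'M[R]_(p, q)) s0 k :
  is_singvals A s0 -> sigma k A = nth 0 s0 k.-1.
Proof.
move=> hs0; rewrite /sigma /singvals.
have hs := epsilon_spec (inhabits [::]) (is_singvals A) (ex_intro _ s0 hs0).
by rewrite (is_singvals_uniq hs hs0).
Qed.

Lemma is_singvals_pad p q (A : 'M[R]_(p, q)) (s0 : seq R) t :
  (size s0 <= minn p q)%N -> sorted (fun x y => y <= x) s0 -> all (fun x => 0 <= x) s0 ->
  char_poly (A *m A^T) * 'X^t = 'X^(p - size s0 + t) * \prod_(x <- s0) ('X - (x ^+ 2)%:P) ->
  is_singvals A (s0 ++ nseq (minn p q - size s0) 0).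
Proof.
move=> hsize so nn hchar.
have ge_trans : transitive (fun x y : R => y <= x) by move=> x y z h1 h2; apply: le_trans h2 h1.
split.
- by rewrite size_cat size_nseq subnKC.
- rewrite sorted_pairwise // pairwise_cat -sorted_pairwise //; apply/and3P; split => //.
    by apply/allrelP => x y /(allP nn) hx; rewrite mem_nseq => /andP [_ /eqP ->].
  elim: (_ - _)%N => //= k ->; rewrite andbT.
  by apply/allP => y; rewrite mem_nseq => /andP [_ /eqP ->].
- by rewrite all_cat nn /=; apply/allP => y; rewrite mem_nseq => /andP [_ /eqP ->].
- apply: (mulIf (x := 'X^t)); first by rewrite expf_neq0 // polyX_eq0.
  rewrite hchar big_cat /= big_nseq expr0n subr0 iter_mulr_1.
  have -> : (p - size s0 + t = (p - minn p q) + (minn p q - size s0) + t)%N.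
    by move: hsize; rewrite leq_min => /andP [h1 h2]; lia.
  by rewrite !exprD; ring.
Qed.

Lemma sigma_pad p q (A : 'M[R]_(p, q)) (s0 : seq R) t k :
  (size s0 <= minn p q)%N -> sorted (fun x y => y <= x) s0 -> all (fun x => 0 <= x) s0 ->
  char_poly (A *m A^T) * 'X^t = 'X^(p - size s0 + t) * \prod_(x <- s0) ('X - (x ^+ 2)%:P) ->
  (0 < k <= size s0)%N -> sigma k A = nth 0 s0 k.-1.
Proof.
move=> hsize so nn hchar hk.
rewrite (sigma_is_singvals _ (is_singvals_pad hsize so nn hchar)) nth_cat.
by move: hk; case: k => // k; rewrite ltnS => /= ->.
Qed.

End SingularValues.

Section DTMFacts.
Variable R : rcfType.

Lemma frob_norm_sqr p q (A : 'M[R]_(p, q)) : frob_norm A ^+ 2 = \sum_i \sum_j A i j ^+ 2.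
Proof.
by rewrite /frob_norm sqr_sqrtr // sumr_ge0 // => i _; rewrite sumr_ge0 // => j _; apply: sqr_ge0.
Qed.

Lemma DTM_entry p q (M : 'M[R]_(p, q)) i j :
  DTM M i j = (Num.sqrt (rowm M 0 i))^-1 * M i j * (Num.sqrt (colm M 0 j))^-1.
Proof. by rewrite /DTM mul_mx_diag mul_diag_mx !mxE. Qed.

(* The DTM only depends on the joint pmf up to a positive factor, so the
   normalization by the total mass in Jfun can be dropped. *)
Lemma DTM_scale p q (M : 'M[R]_(p, q)) c : 0 < c -> DTM (c *: M) = DTM M.
Proof.
move=> c_gt0; apply/matrixP => i j; rewrite !DTM_entry.
have -> : rowm (c *: M) 0 i = c * rowm M 0 i.
  by rewrite !mxE mulr_sumr; apply: eq_bigr => k _; rewrite mxE.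
have -> : colm (c *: M) 0 j = c * colm M 0 j.
  by rewrite !mxE mulr_sumr; apply: eq_bigr => k _; rewrite mxE.
rewrite !sqrtrM ?(ltW c_gt0) // !invfM [(c *: M) i j]mxE.
have c_sqr : c = Num.sqrt c * Num.sqrt c by rewrite -expr2 sqr_sqrtr // ltW.
have sqrt_neq0 : Num.sqrt c != 0 by rewrite sqrtr_eq0 -ltNge.
move: (Num.sqrt (rowm M 0 i))^-1 (Num.sqrt (colm M 0 j))^-1 => x y.
by rewrite [in c * M i j]c_sqr; field.
Qed.

End DTMFacts.

Section TypedMatrices.
Context {R : rcfType}.

Definition typed_mx t p q (tr : 'I_p -> 'I_t) (tc : 'I_q -> 'I_t) (W : 'M[R]_t) : 'M[R]_(p, q) :=
  \matrix_(i, j) W (tr i) (tc j).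

Definition mult t p (tr : 'I_p -> 'I_t) (k : 'I_t) : R := \sum_i (tr i == k)%:R.

Definition row_mass t q (W : 'M[R]_t) (tc : 'I_q -> 'I_t) k := \sum_l mult tc l * W k l.
Definition col_mass t p (W : 'M[R]_t) (tr : 'I_p -> 'I_t) l := \sum_k mult tr k * W k l.

Lemma sum_delta t (a : 'I_t) (F : 'I_t -> R) : \sum_k (a == k)%:R * F k = F a.
Proof.
rewrite (bigD1 a) //= eqxx mul1r big1 ?addr0 // => k hk.
by rewrite eq_sym (negbTE hk) mul0r.
Qed.

Lemma sum_by_type t p (tr : 'I_p -> 'I_t) (F : 'I_t -> R) :
  \sum_i F (tr i) = \sum_k mult tr k * F k.
Proof.
transitivity (\sum_i \sum_k (tr i == k)%:R * F k).
  by apply: eq_bigr => i _; rewrite sum_delta.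
by rewrite exchange_big; apply: eq_bigr => k _; rewrite /mult mulr_suml.
Qed.

Lemma sum_typed_mx t p q (tr : 'I_p -> 'I_t) (tc : 'I_q -> 'I_t) (W : 'M[R]_t) (f : R -> R) :
  \sum_i \sum_j f (typed_mx tr tc W i j) = \sum_k \sum_l mult tr k * mult tc l * f (W k l).
Proof.
transitivity (\sum_i (fun k => \sum_l mult tc l * f (W k l)) (tr i)).
  apply: eq_bigr => i _; rewrite -(sum_by_type tc (fun l => f (W (tr i) l))).
  by apply: eq_bigr => j _; rewrite mxE.
rewrite (sum_by_type tr (fun k => \sum_l mult tc l * f (W k l))).
apply: eq_bigr => k _; rewrite mulr_sumr.
by apply: eq_bigr => l _; rewrite mulrA.
Qed.

Lemma rowm_typed t p q tr tc W i : rowm (@typed_mx t p q tr tc W) 0 i = row_mass W tc (tr i).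
Proof.
rewrite mxE; under eq_bigr do rewrite mxE.
exact: (sum_by_type tc (fun l => W (tr i) l)).
Qed.

Lemma colm_typed t p q tr tc W j : colm (@typed_mx t p q tr tc W) 0 j = col_mass W tr (tc j).
Proof.
rewrite mxE; under eq_bigr do rewrite mxE.
exact: (sum_by_type tr (fun k => W k (tc j))).
Qed.

Lemma typed_mxB t p q (tr : 'I_p -> 'I_t) (tc : 'I_q -> 'I_t) (W V : 'M[R]_t) :
  typed_mx tr tc W - typed_mx tr tc V = typed_mx tr tc (W - V).
Proof. by apply/matrixP => i j; rewrite !mxE. Qed.

Lemma mult_inord t p (f : nat -> nat) (k : 'I_t.+1) : (forall i, (f i < t.+1)%N) ->
  mult (fun i : 'I_p => inord (f i)) k = \sum_(0 <= i < p) ((f i == k)%:R : R).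
Proof.
move=> f_lt; rewrite /mult big_mkord; apply: eq_bigr => i _; congr (_ %:R).
by rewrite -(inj_eq val_inj) /= inordK.
Qed.

Section Reduction.
Variables (t p q : nat) (tr : 'I_p -> 'I_t) (tc : 'I_q -> 'I_t) (W : 'M[R]_t).
Hypothesis row_mass_gt0 : forall k, 0 < row_mass W tc k.
Hypothesis col_mass_gt0 : forall l, 0 < col_mass W tr l.

(* DTM(typed) DTM(typed)^T factors as U G U^T through the t types. *)
Definition type_embed : 'M[R]_(p, t) :=
  \matrix_(i, k) ((tr i == k)%:R * (Num.sqrt (row_mass W tc k))^-1).
Definition type_gram : 'M[R]_t :=
  \matrix_(k, k') \sum_l mult tc l * (W k l * W k' l / col_mass W tr l).

(* The t x t matrix G U^T U carrying the nonzero spectrum of DTM DTM^T. *)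
Definition reduced_mx : 'M[R]_t :=
  \matrix_(k, k') (type_gram k k' * (mult tr k' / row_mass W tc k')).

Lemma DTM_typed_gram :
  DTM (typed_mx tr tc W) *m (DTM (typed_mx tr tc W))^T =
  type_embed *m (type_gram *m type_embed^T).
Proof.
apply/matrixP => i i'; rewrite [LHS]mxE [RHS]mxE.
pose x k := (Num.sqrt (row_mass W tc k))^-1.
pose y l := (Num.sqrt (col_mass W tr l))^-1.
pose F l := x (tr i) * W (tr i) l * y l * (x (tr i') * W (tr i') l * y l).
transitivity (\sum_j F (tc j)).
  by apply: eq_bigr => j _; rewrite /F [_^T _ _]mxE !DTM_entry !rowm_typed !colm_typed !mxE.
rewrite (sum_by_type tc F).
transitivity (\sum_k (tr i == k)%:R *
              (x k * \sum_k' (tr i' == k')%:R * (type_gram k k' * x k'))).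
  rewrite sum_delta sum_delta mxE mulr_suml mulr_sumr; apply: eq_bigr => l _.
  have -> : (col_mass W tr l)^-1 = y l * y l by rewrite -invfM -expr2 sqr_sqrtr // ltW.
  by rewrite /F; ring.
apply: eq_bigr => k _; rewrite !mxE mulrA; congr (_ * _).
by apply: eq_bigr => k' _; rewrite [type_embed^T _ _]mxE [type_embed _ _]mxE mulrCA.
Qed.

Lemma type_embed_gram :
  type_embed^T *m type_embed = diag_mx (\row_k (mult tr k / row_mass W tc k)).
Proof.
apply/matrixP => k k'; rewrite [LHS]mxE [RHS]mxE.
pose x k := (Num.sqrt (row_mass W tc k))^-1.
pose F a := (a == k)%:R * x k * ((a == k')%:R * x k').
transitivity (\sum_i F (tr i)); first by apply: eq_bigr => i _; rewrite /F !mxE.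
rewrite (sum_by_type tr F).
transitivity (\sum_a (k == a)%:R * (mult tr a * (x k * ((a == k')%:R * x k')))).
  by apply: eq_bigr => a _; rewrite /F eq_sym; ring.
rewrite sum_delta !mxE.
have [<-|neq_kk'] := eqVneq k k'; last by rewrite mul0r !mulr0 mulr0n.
by rewrite mul1r mulr1n /x -invfM -expr2 sqr_sqrtr ?ltW.
Qed.

Lemma char_poly_DTM_typed :
  char_poly (DTM (typed_mx tr tc W) *m (DTM (typed_mx tr tc W))^T) * 'X^t =
  'X^p * char_poly reduced_mx.
Proof.
rewrite DTM_typed_gram char_poly_mulmxC -mulmxA type_embed_gram mul_mx_diag.
by congr (_ * char_poly _); apply/matrixP => k k'; rewrite !mxE.
Qed.

Lemma total_typed_gt0 : (0 < p)%N -> 0 < Defs.total (typed_mx tr tc W).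
Proof.
move=> p_gt0; pose i0 : 'I_p := Ordinal p_gt0.
have -> : Defs.total (typed_mx tr tc W) = \sum_i row_mass W tc (tr i).
  by apply: eq_bigr => i _; rewrite -rowm_typed mxE.
rewrite (bigD1 i0) //=; apply: lt_le_trans (row_mass_gt0 (tr i0)) _.
by rewrite lerDl sumr_ge0 // => i _; apply: ltW.
Qed.

End Reduction.
End TypedMatrices.

Lemma Jfun_typed (R : rcfType) t p q (tr : 'I_p -> 'I_t) (tc : 'I_q -> 'I_t) (W V : 'M[R]_t) lam :
  0 < Defs.total (typed_mx tr tc W) ->
  Jfun lam (typed_mx tr tc V) (typed_mx tr tc W) =
  \sum_k \sum_l mult tr k * mult tc l * (W k l - V k l) ^+ 2
  - lam * (sigma 1 (DTM (typed_mx tr tc W)) + sigma 2 (DTM (typed_mx tr tc W))).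
Proof.
move=> total_gt0; rewrite /Jfun typed_mxB frob_norm_sqr DTM_scale ?invr_gt0 //.
rewrite (sum_typed_mx _ _ _ (fun x => x ^+ 2)); congr (_ - _).
by apply: eq_bigr => k _; apply: eq_bigr => l _; rewrite !mxE.
Qed.

Lemma sigma12_eq1 (R : rcfType) p q (A : 'M[R]_(p, q)) (s0 : seq R) t :
  ((size s0).+2 <= minn p q)%N -> sorted (fun x y => y <= x) s0 ->
  all (fun x => 0 <= x <= 1) s0 ->
  char_poly (A *m A^T) * 'X^t =
    'X^(p - (size s0).+2 + t) * (('X - 1) ^+ 2 * \prod_(x <- s0) ('X - (x ^+ 2)%:P)) ->
  sigma 1 A = 1 /\ sigma 2 A = 1.
Proof.
move=> hsize so in01 hchar.
have so' : sorted (fun x y => y <= x) [:: 1, 1 & s0].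
  rewrite /= lexx /=; case: s0 so in01 {hsize hchar} => //= x s0 -> /andP [/andP [_ ->] _].
  by rewrite andbT.
have nn : all (fun x => 0 <= x) [:: 1, 1 & s0].
  by rewrite /= ler01 /=; apply: sub_all in01 => x /andP [].
have hchar' : char_poly (A *m A^T) * 'X^t =
    'X^(p - size [:: 1, 1 & s0] + t) * \prod_(x <- [:: 1, 1 & s0]) ('X - (x ^+ 2)%:P).
  by rewrite hchar !big_cons expr1n polyC1 /=; ring.
by split; rewrite (sigma_pad (s0 := [:: 1, 1 & s0]) hsize so' nn hchar').
Qed.

Lemma Pmat_entry (R : rcfType) m n (s : R) i j :
  Pmat m n s i j = if (i < m)%N == (j < n)%N then s else 1.
Proof.
by rewrite /Pmat !mxE; case: splitP => i' hi; rewrite !mxE; case: splitP => j' hj; rewrite !mxE.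
Qed.

Definition block_type m : 'I_(m + m) -> 'I_2 := fun i => inord (m <= i)%N.
Arguments block_type : clear implicits.

Section Q1.
Variable R : rcfType.

Definition W_Q1 (s : R) : 'M[R]_2 := \matrix_(k, l) ((k == l)%:R * s).
Definition W_P_block (s : R) : 'M[R]_2 := \matrix_(k, l) (if k == l then s else 1).

Lemma Q1mat_entry m n (s : R) i j :
  Q1mat m n s i j = if (i < m)%N == (j < n)%N then s else 0.
Proof.
rewrite /Q1mat [block_mx _ _ _ _ _ _]mxE; case: splitP => i' hi; rewrite [row_mx _ _ _ _]mxE;
  by case: splitP => j' hj; rewrite ?[const_mx _ _ _]mxE ?[(0 : 'M_(_,_)) _ _]mxE.
Qed.

Lemma block_type_eq m n (i : 'I_(m + m)) (j : 'I_(n + n)) :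
  (block_type m i == block_type n j) = ((i < m)%N == (j < n)%N).
Proof.
have lt2 (b : bool) : (b < 2)%N by case: b.
rewrite /block_type -(inj_eq (@ord_inj 2)) !inordK // leqNgt [(n <= j)%N]leqNgt.
by case: (i < m)%N; case: (j < n)%N.
Qed.

Lemma Q1_typed m n (s : R) : Q1mat m n s = typed_mx (block_type m) (block_type n) (W_Q1 s).
Proof.
apply/matrixP => i j; rewrite Q1mat_entry !mxE block_type_eq.
by case: ifP; rewrite ?mul1r ?mul0r.
Qed.

Lemma P_typed_block m n (s : R) : Pmat m n s = typed_mx (block_type m) (block_type n) (W_P_block s).
Proof. by apply/matrixP => i j; rewrite Pmat_entry !mxE block_type_eq. Qed.

Lemma mult_block_type m (k : 'I_2) : mult (block_type m) k = (m%:R : R).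
Proof.
rewrite /block_type (@mult_inord R 1 _ (fun i => nat_of_bool (m <= i)%N)); last first.
  by move=> i; case: (m <= i)%N.
rewrite (big_cat_nat (n := m)) ?leq_addr //=.
rewrite (eq_big_nat _ _ (F2 := fun=> (0%N == k)%:R)); last first.
  by move=> i /andP [_ hi]; rewrite leqNgt hi.
rewrite [X in _ + X](eq_big_nat _ _ (F2 := fun=> (1%N == k)%:R)); last first.
  by move=> i /andP [hi _]; rewrite hi.
rewrite !sumr_const_nat subn0 addnK.
by case: k => [[|[|k]] hk] //=; rewrite ?mul0rn ?add0r ?addr0.
Qed.

Lemma row_mass_Q1 n (s : R) k : row_mass (W_Q1 s) (block_type n) k = n%:R * s.
Proof.
rewrite /row_mass (eq_bigr (fun l => (k == l)%:R * (n%:R * s))) ?sum_delta //.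
by move=> l _; rewrite mult_block_type mxE; ring.
Qed.

Lemma col_mass_Q1 m (s : R) l : col_mass (W_Q1 s) (block_type m) l = m%:R * s.
Proof.
rewrite /col_mass (eq_bigr (fun k => (l == k)%:R * (m%:R * s))) ?sum_delta //.
by move=> k _; rewrite mult_block_type mxE eq_sym; ring.
Qed.

(* The reduced matrix of Q1 is the identity: DTM(Q1) has singular values 1, 1, 0, ... *)
Lemma reduced_Q1 m n (s : R) : (0 < m)%N -> (0 < n)%N -> 0 < s ->
  reduced_mx (block_type m) (block_type n) (W_Q1 s) = 1%:M.
Proof.
move=> m_gt0 n_gt0 s_gt0; apply/matrixP => k k'; rewrite !mxE.
rewrite (eq_bigr (fun l => (k == l)%:R * ((k' == l)%:R * (n%:R * s * s / (m%:R * s)))));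
  last by move=> l _; rewrite mult_block_type !mxE col_mass_Q1; ring.
rewrite sum_delta row_mass_Q1 mult_block_type eq_sym.
have m_neq0 : (m%:R : R) != 0 by rewrite pnatr_eq0 -lt0n.
have n_neq0 : (n%:R : R) != 0 by rewrite pnatr_eq0 -lt0n.
have [_|_] := eqVneq k k'; rewrite /= ?mul0r //.
by field; rewrite m_neq0 n_neq0 gt_eqF.
Qed.

Lemma J_Q1 m n (s lam : R) : (0 < m)%N -> (0 < n)%N -> 0 < s ->
  Jfun lam (Pmat m n s) (Q1mat m n s) = 2 * m%:R * n%:R - 2 * lam.
Proof.
move=> m_gt0 n_gt0 s_gt0.
have row_mass_gt0 k : 0 < row_mass (W_Q1 s) (block_type n) k.
  by rewrite row_mass_Q1 mulr_gt0 ?ltr0n.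
have col_mass_gt0 l : 0 < col_mass (W_Q1 s) (block_type m) l.
  by rewrite col_mass_Q1 mulr_gt0 ?ltr0n.
have char_Q1 := char_poly_DTM_typed row_mass_gt0 col_mass_gt0.
rewrite reduced_Q1 // [char_poly 1%:M]char_poly_trig ?scalar_mx_is_trig //
  !big_ord_recl big_ord0 !mxE /= in char_Q1.
have [sigma1 sigma2] : sigma 1 (DTM (typed_mx (block_type m) (block_type n) (W_Q1 s))) = 1 /\
                       sigma 2 (DTM (typed_mx (block_type m) (block_type n) (W_Q1 s))) = 1.
  apply: (@sigma12_eq1 _ _ _ _ [::] 2); rewrite ?big_nil //=; first by lia.
  by rewrite char_Q1 subnK ?polyC1 ?mulr1 ?expr2 //; lia.
rewrite Q1_typed P_typed_block Jfun_typed ?total_typed_gt0 ?addn_gt0 ?m_gt0 // sigma1 sigma2.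
by rewrite !big_ord_recl !big_ord0 !mult_block_type !mxE /=; ring.
Qed.

End Q1.

Lemma det_mx2 (R : comNzRingType) (B : 'M[R]_2) : \det B = B 0 0 * B 1 1 - B 0 1 * B 1 0.
Proof.
rewrite (expand_det_row _ 0) !big_ord_recl big_ord0 addr0 /cofactor !det_mx11 !mxE /=.
rewrite !expr0 !expr1 !mul1r mulN1r mulrN.
by congr (B _ _ * B _ _ - B _ _ * B _ _); apply/val_inj.
Qed.

Lemma det_mx3 (R : comNzRingType) (B : 'M[R]_3) : \det B =
  B 0 0 * (B 1 1 * B 2 2 - B 1 2 * B 2 1)
  - B 0 1 * (B 1 0 * B 2 2 - B 1 2 * B 2 0)
  + B 0 2 * (B 1 0 * B 2 1 - B 1 1 * B 2 0).
Proof.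
rewrite (expand_det_row _ 0) !big_ord_recl big_ord0 addr0 /cofactor !det_mx2 !mxE /=.
rewrite !expr0 !expr1 /= !mul1r mulN1r /bump /= expr2 mulrNN !mul1r mulrN addrA.
by congr (B _ _ * (B _ _ * B _ _ - B _ _ * B _ _) - B _ _ * (B _ _ * B _ _ - B _ _ * B _ _)
          + B _ _ * (B _ _ * B _ _ - B _ _ * B _ _)); apply/val_inj.
Qed.

(* A 3 x 3 matrix fixing e_3 whose upper-left 2 x 2 block has eigenvalue 1
   has eigenvalues 1, 1 and (trace of the block) - 1. *)
Lemma char_poly_mx3_eig1 (R : comNzRingType) (H : 'M[R]_3) :
  H 0 2 = 0 -> H 1 2 = 0 -> H 2 0 = 0 -> H 2 1 = 0 -> H 2 2 = 1 ->
  (1 - H 0 0) * (1 - H 1 1) = H 0 1 * H 1 0 ->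
  char_poly H = ('X - 1) ^+ 2 * ('X - (H 0 0 + H 1 1 - 1)%:P).
Proof.
move=> h02 h12 h20 h21 h22 eig1.
rewrite /char_poly det_mx3 !mxE /= h02 h12 h20 h21 h22 !polyC0 polyC1 !subr0 !mulr1n !mulr0n.
have eig1P : (1 - (H 0 0)%:P) * (1 - (H 1 1)%:P) = (H 0 1)%:P * (H 1 0)%:P.
  by rewrite -polyC1 -!polyCB -!polyCM eig1.
rewrite polyCB polyCD polyC1.
transitivity (('X - 1) * (('X - (H 0 0)%:P) * ('X - (H 1 1)%:P) - (H 0 1)%:P * (H 1 0)%:P)).
  by ring.
by rewrite -eig1P; ring.
Qed.

Definition corner_class m (i : nat) : nat :=
  if i == (m + m).-1 then 2%N else if (i < m)%N then 0%N else 1%N.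
Definition corner_type m : 'I_(m + m) -> 'I_3 := fun i => inord (corner_class m i).
Arguments corner_type : clear implicits.

Lemma corner_class_lt3 m i : (corner_class m i < 3)%N.
Proof. by rewrite /corner_class; case: ifP => //; case: ifP. Qed.

Lemma corner_type_val m (i : 'I_(m + m)) : nat_of_ord (corner_type m i) = corner_class m i.
Proof. by rewrite /corner_type inordK // corner_class_lt3. Qed.

Section Q2.
Variable R : rcfType.

Definition W_Q2 (s : R) : 'M[R]_3 := \matrix_(k, l)
  if (k == 2%N :> nat) || (l == 2%N :> nat) then
    (if (k == 2%N :> nat) && (l == 2%N :> nat) then s else 0)
  else if (k == 0%N :> nat) == (l == 0%N :> nat) then s else 1.
Definition W_P_corner (s : R) : 'M[R]_3 :=
  \matrix_(k, l) (if (k == 0%N :> nat) == (l == 0%N :> nat) then s else 1).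

Lemma Q2_typed m n (s : R) : (0 < m)%N -> (0 < n)%N ->
  Q2mat m n s = typed_mx (corner_type m) (corner_type n) (W_Q2 s).
Proof.
move=> m_gt0 n_gt0; apply/matrixP => i j.
rewrite [Q2mat _ _ _ _ _]mxE Pmat_entry !mxE !corner_type_val /corner_class.
have := ltn_ord i; have := ltn_ord j.
case: (nat_of_ord i =P (m + m).-1); case: (nat_of_ord j =P (n + n).-1) => //=;
  case: (ltnP i m); case: (ltnP j n) => //=; lia.
Qed.

Lemma P_typed_corner m n (s : R) : (0 < m)%N -> (0 < n)%N ->
  Pmat m n s = typed_mx (corner_type m) (corner_type n) (W_P_corner s).
Proof.
move=> m_gt0 n_gt0; apply/matrixP => i j.
rewrite Pmat_entry !mxE !corner_type_val /corner_class.
have := ltn_ord i; have := ltn_ord j.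
case: (nat_of_ord i =P (m + m).-1); case: (nat_of_ord j =P (n + n).-1) => //=;
  case: (ltnP i m); case: (ltnP j n) => //=; lia.
Qed.

Lemma mult_corner_type m (k : 'I_3) : (0 < m)%N -> mult (corner_type m) k =
  if k == 0%N :> nat then m%:R else if k == 1%N :> nat then m%:R - 1 else 1 : R.
Proof.
move=> m_gt0; rewrite /corner_type (@mult_inord R 2 _ (corner_class m)); last first.
  exact: corner_class_lt3.
rewrite (big_cat_nat (n := m)) ?leq_addr //= (big_cat_nat (m := m) (n := (m + m).-1)) //=; try lia.
rewrite (eq_big_nat _ _ (F2 := fun=> (0%N == k)%:R)); last first.
  by move=> i /andP [_ lt_im]; rewrite /corner_class ifF ?lt_im //; apply/eqP; lia.
rewrite [X in _ + (X + _)](eq_big_nat _ _ (F2 := fun=> (1%N == k)%:R)); last first.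
  move=> i /andP [le_mi lt_i]; rewrite /corner_class ifF ?ifF //; first by lia.
  by apply/eqP; lia.
rewrite [X in _ + (_ + X)](eq_big_nat _ _ (F2 := fun=> (2%N == k)%:R)); last first.
  by move=> i /andP [le_i lt_i]; rewrite /corner_class ifT //; apply/eqP; lia.
rewrite !sumr_const_nat subn0 (_ : (m + m).-1 - m = m - 1)%N; last by lia.
rewrite (_ : (m + m - (m + m).-1 = 1)%N); last by lia.
by case: k => [[|[|[|k]]] hk] //=; rewrite ?mul0rn ?add0r ?addr0 ?natrB.
Qed.

Lemma row_mass_Q2 n (s : R) (k : 'I_3) : (0 < n)%N -> row_mass (W_Q2 s) (corner_type n) k =
  if k == 0%N :> nat then n%:R * s + (n%:R - 1)
  else if k == 1%N :> nat then n%:R + (n%:R - 1) * s else s.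
Proof.
move=> n_gt0; rewrite /row_mass !big_ord_recl !big_ord0 !mult_corner_type // !mxE.
by case: k => [[|[|[|k]]] hk] //=; ring.
Qed.

Lemma col_mass_Q2 m (s : R) (l : 'I_3) : (0 < m)%N -> col_mass (W_Q2 s) (corner_type m) l =
  if l == 0%N :> nat then m%:R * s + (m%:R - 1)
  else if l == 1%N :> nat then m%:R + (m%:R - 1) * s else s.
Proof.
move=> m_gt0; rewrite /col_mass !big_ord_recl !big_ord0 !mult_corner_type // !mxE.
by case: l => [[|[|[|l]]] hl] //=; ring.
Qed.

Lemma block_masses_gt0 (x s : R) : 1 <= x -> 1 < s ->
  0 < x * s + (x - 1) /\ 0 < x + (x - 1) * s.
Proof.
move=> x_ge1 s_gt1.
have : 0 <= (x - 1) * (s - 1) by apply: mulr_ge0; rewrite subr_ge0 // ltW.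
by split; nra.
Qed.

(* The third squared singular value mu of DTM(Q2) is the product of this
   ratio for the rows (x = m) and for the columns (x = n). *)
Definition block_ratio (x s : R) : R :=
  x * (x - 1) * (s ^+ 2 - 1) / ((x * s + (x - 1)) * (x + (x - 1) * s)).

Lemma block_ratio_01 (x s : R) : 1 <= x -> 1 < s -> 0 <= block_ratio x s <= 1.
Proof.
move=> x_ge1 s_gt1; have [pos0 pos1] := block_masses_gt0 x_ge1 s_gt1.
have num_ge0 : 0 <= x * (x - 1) * (s ^+ 2 - 1).
  apply: mulr_ge0; first by apply: mulr_ge0; lra.
  by rewrite subr_ge0; apply: exprn_ege1; lra.
rewrite /block_ratio; apply/andP; split.
  by apply: divr_ge0 => //; apply: mulr_ge0; apply: ltW.
rewrite ler_pdivrMr ?mulr_gt0 // mul1r -subr_ge0.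
have -> : (x * s + (x - 1)) * (x + (x - 1) * s) - x * (x - 1) * (s ^+ 2 - 1) =
          x ^+ 2 * s + 2 * x * (x - 1) + (x - 1) ^+ 2 * s by ring.
have := sqr_ge0 (x - 1); nra.
Qed.

Definition mu m n (s : R) : R := block_ratio m%:R s * block_ratio n%:R s.

Section Q2Spectrum.
Variables (m n : nat) (s : R).
Hypotheses (m_gt0 : (0 < m)%N) (n_gt0 : (0 < n)%N) (s_gt1 : 1 < s).

Let m_ge1 : 1 <= m%:R :> R. Proof. by rewrite ler1n. Qed.
Let n_ge1 : 1 <= n%:R :> R. Proof. by rewrite ler1n. Qed.
Let s_gt0 : 0 < s. Proof. exact: lt_trans ltr01 s_gt1. Qed.

Lemma row_mass_Q2_gt0 k : 0 < row_mass (W_Q2 s) (corner_type n) k.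
Proof.
have [pos0 pos1] := block_masses_gt0 n_ge1 s_gt1.
by rewrite row_mass_Q2 //; case: ifP => // _; case: ifP.
Qed.

Lemma col_mass_Q2_gt0 l : 0 < col_mass (W_Q2 s) (corner_type m) l.
Proof.
have [pos0 pos1] := block_masses_gt0 m_ge1 s_gt1.
by rewrite col_mass_Q2 //; case: ifP => // _; case: ifP.
Qed.

(* The reduced matrix of Q2 fixes the corner type and its 2 x 2 block has
   eigenvalue 1 (the trivial singular value of the first 2m - 1 rows); the
   remaining eigenvalue is mu. *)
Lemma char_poly_reduced_Q2 :
  char_poly (reduced_mx (corner_type m) (corner_type n) (W_Q2 s)) =
  ('X - 1) ^+ 2 * ('X - (mu m n s)%:P).
Proof.
have [cpos0 cpos1] := block_masses_gt0 m_ge1 s_gt1.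
have [rpos0 rpos1] := block_masses_gt0 n_ge1 s_gt1.
have s_neq0 : s != 0 by rewrite gt_eqF.
move: (gt_eqF cpos0) (gt_eqF cpos1) (gt_eqF rpos0) (gt_eqF rpos1) => c0 c1 r0 r1.
set H := reduced_mx _ _ _.
have Hentry (k k' : 'I_3) : H k k' = type_gram (corner_type m) (corner_type n) (W_Q2 s) k k'
    * (mult (corner_type m) k' / row_mass (W_Q2 s) (corner_type n) k') by rewrite mxE.
have trace_eq : H 0 0 + H 1 1 - 1 = mu m n s.
  rewrite !Hentry /mu /block_ratio !mxE !big_ord_recl !big_ord0 !mult_corner_type //.
  rewrite !col_mass_Q2 // !row_mass_Q2 // !mxE /=.
  by field; rewrite s_neq0 c0 c1 r0 r1.
rewrite -trace_eq; apply: char_poly_mx3_eig1; rewrite !Hentry !mxE !big_ord_recl !big_ord0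
  !mult_corner_type // !col_mass_Q2 // !row_mass_Q2 // !mxE /=;
  by field; rewrite ?s_neq0 ?c0 ?c1 ?r0 ?r1.
Qed.

Lemma mu_01 : 0 <= mu m n s <= 1.
Proof.
have /andP [rm_ge0 rm_le1] := block_ratio_01 m_ge1 s_gt1.
have /andP [rn_ge0 rn_le1] := block_ratio_01 n_ge1 s_gt1.
by rewrite mulr_ge0 // mulr_ile1.
Qed.

(* DTM(Q2) has singular values 1, 1, sqrt mu, 0, ...; sqrt mu vanishes when a
   block is a single row or column. *)
Lemma sigma12_Q2 :
  sigma 1 (DTM (typed_mx (corner_type m) (corner_type n) (W_Q2 s))) = 1 /\
  sigma 2 (DTM (typed_mx (corner_type m) (corner_type n) (W_Q2 s))) = 1.
Proof.
have char_Q2 := char_poly_DTM_typed row_mass_Q2_gt0 col_mass_Q2_gt0.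
rewrite char_poly_reduced_Q2 in char_Q2.
have /andP [mu_ge0 mu_le1] := mu_01.
have [/andP [m_gt1 n_gt1] | small] := boolP ((1 < m) && (1 < n))%N.
  apply: (@sigma12_eq1 _ _ _ _ [:: Num.sqrt (mu m n s)] 3) => //=; first by lia.
    by rewrite andbT sqrtr_ge0 -[X in _ <= X]sqrtr1 ler_sqrt ?ler01.
  by rewrite char_Q2 big_cons big_nil sqr_sqrtr // subnK ?mulr1 //; lia.
have mu0 : mu m n s = 0.
  have ratio1 : block_ratio 1%:R s = 0 by rewrite /block_ratio mulr1n subrr mulr0 !mul0r.
  move: small; rewrite negb_and -!leqNgt => /orP [m_le1 | n_le1].
    by rewrite /mu (_ : m = 1%N) ?ratio1 ?mul0r //; lia.
  by rewrite /mu (_ : n = 1%N) ?ratio1 ?mulr0 //; lia.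
apply: (@sigma12_eq1 _ _ _ _ [::] 3) => //=; first by lia.
rewrite char_Q2 mu0 subr0 big_nil (_ : (m + m - 2 + 3 = (m + m).+1)%N); last by lia.
by rewrite [in RHS]exprSr; ring.
Qed.

Lemma J_Q2 lam : Jfun lam (Pmat m n s) (Q2mat m n s) =
  m%:R + n%:R + s ^+ 2 * (m%:R + n%:R - 2) - 2 * lam.
Proof.
have [sigma1 sigma2] := sigma12_Q2.
rewrite Q2_typed // P_typed_corner // Jfun_typed; last first.
  by apply: total_typed_gt0; [exact: row_mass_Q2_gt0 | rewrite addn_gt0 m_gt0].
rewrite sigma1 sigma2 !big_ord_recl !big_ord0 !mult_corner_type // !mxE /=.
by ring.
Qed.

End Q2Spectrum.
End Q2.

Lemma admissible_Q1 (R : rcfType) m n (s : R) : (0 < m)%N -> (0 < n)%N -> 0 < s ->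
  admissible (Q1mat m n s).
Proof.
move=> m_gt0 n_gt0 s_gt0; have s_neq0 : s != 0 by rewrite gt_eqF.
split; [|split].
- by move=> i j; rewrite Q1mat_entry; case: ifP => _; [exact: ltW|].
- move=> i; have [lt_im|le_mi] := ltnP i m.
    have lt0 : (0 < n + n)%N by lia.
    by exists (Ordinal lt0); rewrite Q1mat_entry /= lt_im n_gt0.
  have ltn : (n < n + n)%N by lia.
  by exists (Ordinal ltn); rewrite Q1mat_entry /= ltnn ltnNge le_mi.
- move=> j; have [lt_jn|le_nj] := ltnP j n.
    have lt0 : (0 < m + m)%N by lia.
    by exists (Ordinal lt0); rewrite Q1mat_entry /= lt_jn m_gt0.
  have ltm : (m < m + m)%N by lia.
  by exists (Ordinal ltm); rewrite Q1mat_entry /= ltnn ltnNge le_nj.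
Qed.

Lemma admissible_Q2 (R : rcfType) m n (s : R) : (0 < m)%N -> (0 < n)%N -> 1 < s ->
  admissible (Q2mat m n s).
Proof.
move=> m_gt0 n_gt0 s_gt1; have s_gt0 : 0 < s := lt_trans ltr01 s_gt1.
have s_neq0 : s != 0 by rewrite gt_eqF.
split; [|split].
- move=> i j; rewrite Q2_typed // !mxE.
  by do ![case: ifP => _]; rewrite ?ler01 ?(ltW s_gt0).
- move=> i; have [last_i|not_last] := eqVneq (nat_of_ord i) (m + m).-1.
    have lt_last : ((n + n).-1 < n + n)%N by lia.
    by exists (Ordinal lt_last); rewrite mxE /= last_i !eqxx.
  have lt0 : (0 < n + n)%N by lia.
  exists (Ordinal lt0); rewrite mxE /= (negbTE not_last) /= ifF; last by apply/eqP; lia.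
  by rewrite Pmat_entry; case: ifP => _ //; exact: oner_neq0.
- move=> j; have [last_j|not_last] := eqVneq (nat_of_ord j) (n + n).-1.
    have lt_last : ((m + m).-1 < m + m)%N by lia.
    by exists (Ordinal lt_last); rewrite mxE /= last_j !eqxx.
  have lt0 : (0 < m + m)%N by lia.
  exists (Ordinal lt0); rewrite mxE /= (negbTE not_last) orbF ifF; last by apply/eqP; lia.
  by rewrite Pmat_entry; case: ifP => _ //; exact: oner_neq0.
Qed.

Lemma below_threshold (R : rcfType) (m n : nat) (s : R) : (3 <= m + n)%N -> 1 < s ->
  s < Num.sqrt ((2 * m%:R * n%:R - m%:R - n%:R) / (m%:R + n%:R - 2)) ->
  m%:R + n%:R + s ^+ 2 * (m%:R + n%:R - 2) < 2 * m%:R * n%:R.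
Proof.
move=> mn_ge3 s_gt1; set X := (_ / _) => s_lt.
have denom_ge1 : 1 <= m%:R + n%:R - 2 :> R.
  have : 3 <= m%:R + n%:R :> R by rewrite -natrD ler_nat.
  lra.
have sqr_lt : s ^+ 2 < X.
  have [X_lt0|X_ge0] := ltP X 0.
    by move: s_lt; rewrite ltr0_sqrtr //; lra.
  rewrite -(sqr_sqrtr X_ge0) ltr_pXn2r // nnegrE ?sqrtr_ge0 //; lra.
have : s ^+ 2 * (m%:R + n%:R - 2) < 2 * m%:R * n%:R - m%:R - n%:R.
  by rewrite -ltr_pdivlMr //; lra.
lra.
Qed.

Theorem mainTheorem6 (R : rcfType) (m n : nat) (s lam : R)
  (hm : (1 <= m)%N) (hn : (1 <= n)%N) (hmn : (3 <= m + n)%N)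
  (hs : 1 < s) (hlam : 0 < lam) :
  let P := Pmat m n s in
  let Q1 := Q1mat m n s in
  let Q2 := Q2mat m n s in
  [/\ admissible Q1, admissible Q2,
      Jfun lam P Q1 = 2 * m%:R * n%:R - 2 * lam,
      Jfun lam P Q2 = m%:R + n%:R + s ^+ 2 * (m%:R + n%:R - 2) - 2 * lam &
      (s < Num.sqrt ((2 * m%:R * n%:R - m%:R - n%:R) / (m%:R + n%:R - 2)) ->
        Jfun lam P Q2 < Jfun lam P Q1 /\
        ~ (forall Q : 'M[R]_(m + m, n + n), admissible Q -> Jfun lam P Q1 <= Jfun lam P Q))].
Proof.
move=> P Q1 Q2; have s_gt0 : 0 < s := lt_trans ltr01 hs.
have J1 := J_Q1 lam hm hn s_gt0.
have J2 := J_Q2 hm hn hs lam.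
have adm2 := admissible_Q2 hm hn hs.
split => // [|s_lt]; first exact: admissible_Q1.
have J2_lt_J1 : Jfun lam P Q2 < Jfun lam P Q1.
  by rewrite J1 J2 ltrD2r; exact: below_threshold.
by split => // Q1_min; move: (Q1_min _ adm2); rewrite leNgt J2_lt_J1.
Qed.
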